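(* Let $\mathcal{C}$ be a prevariety over a finite alphabet $A$ and let $\alpha:A^*\to M$ be a morphism into a finite monoid. If $(s_1,t_1),(s_2,t_2)\in M^2$ are $\mathcal{C}$-pairs for $\alpha$, then $(s_1s_2,t_1t_2)$ is a $\mathcal{C}$-pair for $\alpha$.
   Context: Fix a finite alphabet $A$. A prevariety is a class of regular languages over $A$ containing $\emptyset$ and $A^*$, closed under union, intersection, complement, and under the quotients $u^{-1}L=\{w\mid uw\in L\}$ and $Lu^{-1}=\{w\mid wu\in L\}$. A language $L_1$ is $\mathcal{C}$-separable from $L_2$ if some $K\in\mathcal{C}$ satisfies $L_1\subseteq K$ and $K\cap L_2=\emptyset$. For a morphism $\alpha:A^*\to M$, a pair $(s,t)\in M^2$ is a $\mathcal{C}$-pair for $\alpha$ if $\alpha^{-1}(s)$ is not $\mathcal{C}$-separable from $\alpha^{-1}(t)$. *)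

From mathcomp Require Import all_boot.
Set Implicit Arguments. Unset Strict Implicit. Unset Printing Implicit Defensive.

Definition lang (A : finType) := seq A -> Prop.

Record dfa (A : finType) := DFA {
  dfa_state : finType;
  dfa_init : dfa_state;
  dfa_delta : dfa_state -> A -> dfa_state;
  dfa_final : pred dfa_state }.

Definition dfa_accept (A : finType) (D : dfa A) (w : seq A) : bool :=
  @dfa_final A D (foldl (@dfa_delta A D) (@dfa_init A D) w).

Definition regular (A : finType) (L : lang A) : Prop :=
  exists D : dfa A, forall w, L w <-> dfa_accept D w.

Definition lquot (A : finType) (u : seq A) (L : lang A) : lang A :=
  fun w => L (u ++ w).
Definition rquot (A : finType) (L : lang A) (u : seq A) : lang A :=
  fun w => L (w ++ u).

Definition prevariety (A : finType) (C : lang A -> Prop) : Prop :=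
  (forall L, C L -> regular L) /\
  C (fun _ => False) /\
  C (fun _ => True) /\
  (forall L1 L2, C L1 -> C L2 -> C (fun w => L1 w \/ L2 w)) /\
  (forall L1 L2, C L1 -> C L2 -> C (fun w => L1 w /\ L2 w)) /\
  (forall L, C L -> C (fun w => ~ L w)) /\
  (forall L u, C L -> C (lquot u L)) /\
  (forall L u, C L -> C (rquot L u)).

Definition separable (A : finType) (C : lang A -> Prop) (L1 L2 : lang A) : Prop :=
  exists K, C K /\ (forall w, L1 w -> K w) /\ (forall w, K w -> L2 w -> False).

Definition is_monoid (M : finType) (mul : M -> M -> M) (one : M) : Prop :=
  [/\ (forall x y z, mul x (mul y z) = mul (mul x y) z),
      (forall x, mul one x = x) & (forall x, mul x one = x)].

Definition is_morphism (A : finType) (M : finType) (mul : M -> M -> M) (one : M)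
    (alpha : seq A -> M) : Prop :=
  alpha [::] = one /\ (forall u v, alpha (u ++ v) = mul (alpha u) (alpha v)).

Definition Cpair (A : finType) (C : lang A -> Prop) (M : finType)
    (alpha : seq A -> M) (s t : M) : Prop :=
  ~ separable C (fun w => alpha w = s) (fun w => alpha w = t).

(** Non-separability is preserved by concatenation: if [L1] is not
    [C]-separable from [L1'] and [P] not from [Q], then [L1 P] is not
    [C]-separable from [L1' Q]; the theorem follows since
    [alpha^-1(s1) alpha^-1(s2)] and [alpha^-1(t1) alpha^-1(t2)] lie in
    [alpha^-1(s1 s2)] and [alpha^-1(t1 t2)].  Suppose [K] in [C] separated
    [L1 P] from [L1' Q].  As [K] is regular, [u^-1 K] depends only on the
    state reached by [u] in a DFA for [K].  For [u] in [L1], [u^-1 K] is in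
    [C] and contains [P], so it meets [Q] in some [v_u]; the finitely many
    [K v_u^-1] then give a language of [C] containing [L1] whose words all
    extend into [K] by a word of [Q], so it is disjoint from [L1'], which
    separates [L1] from [L1']. *)

From mathcomp Require Import all_boot.
From Stdlib Require Import Classical.

Set Implicit Arguments.
Unset Strict Implicit.
Unset Printing Implicit Defensive.

Definition lcat (A : finType) (L1 L2 : lang A) : lang A :=
  fun w => exists u v, [/\ w = u ++ v, L1 u & L2 v].

Definition dfa_run (A : finType) (D : dfa A) (w : seq A) : dfa_state D :=
  foldl (@dfa_delta A D) (@dfa_init A D) w.

Lemma dfa_run_cat (A : finType) (D : dfa A) (u w : seq A) :
  dfa_run D (u ++ w) = foldl (@dfa_delta A D) (dfa_run D u) w.
Proof. exact: foldl_cat. Qed.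

Lemma regular_finite_lquot (A : finType) (L : lang A) :
  regular L -> exists (S : finType) (f : seq A -> S),
    forall u u', f u = f u' -> forall w, L (u ++ w) -> L (u' ++ w).
Proof.
move=> [D accD]; exists (dfa_state D), (dfa_run D) => u u' eq_run w.
by rewrite !accD /dfa_accept -!/(dfa_run D _) !dfa_run_cat eq_run.
Qed.

Lemma separable_sub (A : finType) (C : lang A -> Prop) (L1 L2 L1' L2' : lang A) :
  (forall w, L1 w -> L1' w) -> (forall w, L2 w -> L2' w) ->
  separable C L1' L2' -> separable C L1 L2.
Proof.
move=> sub1 sub2 [K [CK [subK disK]]]; exists K; split=> //.
by split=> [w /sub1/subK | w Kw /sub2/(disK w Kw)].
Qed.

Lemma nonseparable_witness (A : finType) (C : lang A -> Prop) (L1 L2 K : lang A) :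
  ~ separable C L1 L2 -> C K -> (forall w, L1 w -> K w) ->
  exists w, K w /\ L2 w.
Proof.
move=> nsep CK subK; apply: NNPP => disK; apply: nsep; exists K.
by do 2!split=> //; move=> w Kw L2w; apply: disK; exists w.
Qed.

Section Prevariety.

Variables (A : finType) (C : lang A -> Prop).
Hypothesis prevC : prevariety C.

Let C_regular L : C L -> regular L.
Proof. by case: prevC => reg _; apply: reg. Qed.

Let C_empty : C (fun _ => False).
Proof. by case: prevC => _ []. Qed.

Let C_union L1 L2 : C L1 -> C L2 -> C (fun w => L1 w \/ L2 w).
Proof. by case: prevC => _ [_ [_ [union _]]]; apply: union. Qed.

Let C_lquot L u : C L -> C (lquot u L).
Proof. by case: prevC => _ [_ [_ [_ [_ [_ [lq _]]]]]]; apply: lq. Qed.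

Let C_rquot L u : C L -> C (rquot L u).
Proof. by case: prevC => _ [_ [_ [_ [_ [_ [_ rq]]]]]]; apply: rq. Qed.

Lemma separable_empty (L1 L2 : lang A) :
  (forall w, ~ L1 w) -> separable C L1 L2.
Proof. by move=> L1_0; exists (fun _ => False); do 2!split=> //. Qed.

Lemma separable_inhabited (L1 L2 : lang A) :
  (forall u, L1 u -> separable C L1 L2) -> separable C L1 L2.
Proof.
move=> sepL1; case: (classic (exists u, L1 u)) => [[u /sepL1] // | L1_0].
by apply: separable_empty => w L1w; apply: L1_0; exists w.
Qed.

Lemma separable_bigcup (I : eqType) (r : seq I) (F : I -> lang A) (L1 L2 : lang A) :
  (forall w, L1 w -> exists2 i, i \in r & F i w) ->
  (forall i, i \in r -> separable C (F i) L2) -> separable C L1 L2.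
Proof.
elim: r L1 => [|i r IHr] L1 coverL1 sepF.
  by apply: separable_empty => w /coverL1 [].
have [Ki [CKi [subKi disKi]]] := sepF i (mem_head i r).
have [Kr [CKr [subKr disKr]]] : separable C (fun w => exists2 j, j \in r & F j w) L2.
  by apply: IHr => // j jr; apply: sepF; rewrite in_cons jr orbT.
exists (fun w => Ki w \/ Kr w); split; first exact: C_union.
split=> [w /coverL1 [j] | w [/disKi | /disKr] //].
rewrite in_cons => /predU1P [-> /subKi | jr Fjw]; first by left.
by right; apply: subKr; exists j.
Qed.

Lemma separable_no_completion (K L1 P Q : lang A) :
  ~ separable C P Q -> C K -> (forall u v, L1 u -> P v -> K (u ++ v)) ->
  separable C L1 (fun w => ~ exists2 v, Q v & K (w ++ v)).
Proof.
move=> nsepPQ CK L1PK; have [S [f quotK]] := regular_finite_lquot (C_regular CK).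
apply: (@separable_bigcup _ (enum S) (fun q u => L1 u /\ f u = q)).
  by move=> u L1u; exists (f u); rewrite ?mem_enum.
move=> q _; apply: separable_inhabited => u0 [L1u0 fu0].
have [v [Ku0v Qv]] := nonseparable_witness nsepPQ (C_lquot u0 CK) (L1PK u0 ^~ L1u0).
exists (rquot K v); split; first exact: C_rquot.
split=> [u [_ fu] | w Kwv]; last by apply; exists v.
by apply: (quotK u0); rewrite ?fu ?fu0.
Qed.

Lemma nonseparable_cat (L1 L1' P Q : lang A) :
  ~ separable C L1 L1' -> ~ separable C P Q ->
  ~ separable C (lcat L1 P) (lcat L1' Q).
Proof.
move=> nsepL nsepPQ [K [CK [subK disK]]].
have L1PK u v : L1 u -> P v -> K (u ++ v).
  by move=> L1u Pv; apply: subK; exists u, v.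
have [H [CH [subH disH]]] := separable_no_completion nsepPQ CK L1PK.
apply: nsepL; exists H; do 2!split=> //.
move=> w Hw L1'w; apply: (disH w Hw) => -[v Qv Kwv].
by apply: (disK _ Kwv); exists w, v.
Qed.

End Prevariety.

Theorem lemma5p4 (A : finType) (C : lang A -> Prop) (M : finType)
    (mul : M -> M -> M) (one : M) (alpha : seq A -> M)
    (s1 t1 s2 t2 : M) :
  prevariety C -> is_monoid mul one -> is_morphism mul one alpha ->
  Cpair C alpha s1 t1 -> Cpair C alpha s2 t2 ->
  Cpair C alpha (mul s1 s2) (mul t1 t2).
Proof.
move=> prevC _ [_ alphaM] pair1 pair2 sep12.
have alpha_cat s t : forall w, lcat (fun u => alpha u = s) (fun v => alpha v = t) w ->
    alpha w = mul s t.
  by move=> w [u [v [-> <- <-]]]; exact: alphaM.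
apply: (nonseparable_cat prevC pair1 pair2).
exact: separable_sub (alpha_cat s1 s2) (alpha_cat t1 t2) sep12.
Qed.
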